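(* Let $r$ be a Hermitian symmetric polynomial in one complex variable with $r(z,\overline z)>0$ for all $z\in\mathbb{C}$ but $\inf_{z\in\mathbb{C}}r(z,\overline z)=0$. Then $r\notin\mathcal{Q}'(1)$.
   Context: $\mathcal{Q}'(1)$: Hermitian symmetric polynomials $r$ in one variable with $r(z,\overline z)\ge0$ for all $z$ for which there exist a Hermitian symmetric polynomial $s\ge0$, not identically $0$, and a holomorphic polynomial mapping $F$ with $rs=\|F\|^2$. *)

From HB Require Import structures.
From mathcomp Require Import all_boot all_order all_algebra.
From mathcomp Require Import complex.
From mathcomp Require Import reals.
Set Implicit Arguments. Unset Strict Implicit. Unset Printing Implicit Defensive.
Import Order.TTheory GRing.Theory Num.Theory.
Local Open Scope ring_scope.

(* A polynomial in two complex variables (z, w) is represented as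
   r : {poly {poly C}}, where the coefficient of z^a w^b is (r`_a)`_b.
   The Hermitian symmetric polynomial r(z, wbar) is evaluated at (z, wbar). *)
Definition beval (C : comNzRingType) (r : {poly {poly C}}) (z w : C) : C :=
  (map_poly (fun q : {poly C} => q.[w]) r).[z].

Section HermDefs.
Variable R : realType.
Local Notation C := (R[i]).

Definition herm_sym (r : {poly {poly C}}) : Prop :=
  forall a b : nat, (r`_a)`_b = ((r`_b)`_a)^*.

Definition hdiag (r : {poly {poly C}}) (z : C) : C := beval r z z^*.

Definition sqnorm (F : seq {poly C}) (z : C) : C :=
  \sum_(f <- F) `|f.[z]| ^+ 2.

Definition Qprime1 (r : {poly {poly C}}) : Prop :=
  herm_sym r /\ (forall z : C, 0 <= hdiag r z) /\
  exists (s : {poly {poly C}}) (F : seq {poly C}),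
    [/\ herm_sym s, (forall z : C, 0 <= hdiag s z), s != 0 &
        forall z : C, hdiag r z * hdiag s z = sqnorm F z].
End HermDefs.

From HB Require Import structures.
From mathcomp Require Import all_boot all_order all_algebra.
From mathcomp Require Import complex.
From mathcomp Require Import reals.
From mathcomp Require Import all_classical topology normedtype derive.
From mathcomp Require Import zify ring lra.
Import Order.TTheory GRing.Theory Num.Theory.
Import numFieldNormedType.Exports.
Local Open Scope ring_scope.
Set Implicit Arguments. Unset Strict Implicit.

(** For |u| = 1 and real t, the functions t |-> r(tu, t ubar), t |-> s(tu, t ubar)
    and t |-> ||F(tu)||^2 are polynomials R_u, S_u, N_u whose coefficients are
    bounded uniformly in u, and r s = ||F||^2 gives R_u S_u = N_u.  If n is the
    largest degree of the components of F, the coefficient of t^(2n) in N_u is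
    sum_f |f_n|^2 > 0 for every u, so the leading coefficients of the R_u stay
    away from 0 uniformly in u, and r is bounded below by a positive constant
    outside a large disc.  On the disc r is continuous and positive, hence has a
    positive minimum: inf r > 0.  If F = 0, then s vanishes on the diagonal
    {(z, zbar)}, which forces s = 0. *)

Lemma poly_eq_on_injective (K : idomainType) (x : nat -> K) (p q : {poly K}) :
  injective x -> (forall n, p.[x n] = q.[x n]) -> p = q.
Proof.
move=> x_inj pq; apply/eqP; rewrite -subr_eq0; apply/negPn/negP => nz.
pose xs := [seq x n | n <- iota 0 (size (p - q))].
have xs_roots : all (root (p - q)) xs.
  by apply/allP => _ /mapP[n _ ->]; rewrite /root hornerD hornerN pq subrr.
have xs_uniq : uniq xs by rewrite map_inj_uniq ?iota_uniq.
by have := max_poly_roots nz xs_roots xs_uniq; rewrite size_map size_iota ltnn.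
Qed.

Lemma coefM_double (K : nzSemiRingType) (p q : {poly K}) n :
  (size p <= n.+1)%N -> (size q <= n.+1)%N -> (p * q)`_(n + n) = p`_n * q`_n.
Proof.
move=> sp sq; rewrite coefM (bigD1 (Ordinal (leq_addr n n.+1))) //= addnK.
rewrite big1 ?addr0 // => j /eqP nj.
have [nj_lt|jn_le] := ltnP n j.
  by rewrite (nth_default 0 (leq_trans sp nj_lt)) mul0r.
have jn : j != n :> nat by apply/eqP => e; apply: nj; apply: val_inj.
have hj : (n < n + n - j)%N by lia.
by rewrite (nth_default 0 (leq_trans sq hj)) mulr0.
Qed.

Lemma bigmax_seq_attained (T : eqType) (s : seq T) (f : T -> nat) :
  (0 < \max_(x <- s) f x)%N -> exists2 x, x \in s & f x = \max_(y <- s) f y.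
Proof.
elim: s => [|y s IH]; rewrite ?big_nil // big_cons => max_gt0.
have [max_le|max_gt] := leqP (\max_(x <- s) f x) (f y).
  by exists y; rewrite ?mem_head // (maxn_idPl max_le).
have [x xs x_max] := IH (leq_ltn_trans (leq0n _) max_gt).
by exists x; rewrite ?inE ?xs ?orbT // x_max (maxn_idPr (ltnW max_gt)).
Qed.

Lemma norm_horner_ge (K : numDomainType) (p : {poly K}) (m G t : K) (L : nat) :
  0 < m -> m <= `|lead_coef p| -> (forall k, `|p`_k| <= G) -> (size p <= L)%N ->
  1 <= t -> m + L%:R * G <= m * t -> m <= `|p.[t]|.
Proof.
move=> m_gt0 m_le_lead coef_le size_le t_ge1 t_large.
have G_ge0 : 0 <= G := le_trans (normr_ge0 _) (coef_le 0%N).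
have t_ge0 : 0 <= t := le_trans ler01 t_ge1.
have p_neq0 : p != 0.
  by apply: contraTneq m_le_lead => ->; rewrite lead_coef0 normr0 lt_geF.
rewrite horner_coef; move: m_le_lead (size_poly_gt0 p) size_le; rewrite p_neq0 lead_coefE.
case: (size p) => [//|[|q]] m_le_lead _ size_le; rewrite big_ord_recr /=.
  by rewrite big_ord0 add0r expr0 mulr1.
have low_le : `|\sum_(i < q.+1) p`_i * t ^+ i| <= L%:R * G * t ^+ q.
  apply: le_trans (ler_norm_sum _ _ _) _.
  apply: le_trans (_ : \sum_(i < q.+1) G * t ^+ q <= _).
    apply: ler_sum => i _; rewrite normrM (ger0_norm (exprn_ge0 _ t_ge0)).
    apply: ler_pM => //; first exact: exprn_ge0.
    by apply: ler_weXn2l => //; rewrite -ltnS.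
  rewrite sumr_const card_ord -mulrnAl; apply: ler_wpM2r; first exact: exprn_ge0.
  by rewrite -[G *+ _]mulr_natl; apply: ler_wpM2r => //; rewrite ler_nat; lia.
have top_ge : m * t ^+ q.+1 <= `|p`_q.+1 * t ^+ q.+1|.
  by rewrite normrM (ger0_norm (exprn_ge0 _ t_ge0)); apply: ler_wpM2r; rewrite ?exprn_ge0.
rewrite addrC; apply: le_trans (lerB_normD _ _).
apply: le_trans (lerB top_ge low_le).
apply: le_trans (_ : m * t ^+ q <= _); first exact: ler_peMr (ltW m_gt0) (exprn_ege1 q t_ge1).
rewrite -subr_ge0 (_ : _ - _ = (m * t - (m + L%:R * G)) * t ^+ q); last first.
  by rewrite exprS; ring.
by rewrite mulr_ge0 ?subr_ge0 ?exprn_ge0.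
Qed.

Section ComRingPolynomials.
Variable K : comNzRingType.

Definition bisize_leq (N : nat) (r : {poly {poly K}}) :=
  (size r <= N)%N /\ forall a, leq (size r`_a) N.

Lemma bisize_leq_widen N M r : (N <= M)%N -> bisize_leq N r -> bisize_leq M r.
Proof.
by move=> NM [r_le ra_le]; split=> [|a]; [apply: leq_trans NM | apply: leq_trans (ra_le a) NM].
Qed.

Lemma bisize_leq_exists r s : exists N, bisize_leq N r /\ bisize_leq N s.
Proof.
have bound (p : {poly {poly K}}) :
    bisize_leq (maxn (size p) (\max_(a < size p) size (p`_a)%R)) p.
  split=> [|a]; first exact: leq_maxl.
  have [a_lt|a_ge] := ltnP a (size p); last by rewrite nth_default ?size_poly0.
  by apply: leq_trans (leq_maxr _ _); apply: (leq_bigmax (Ordinal a_lt)).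
exists (maxn (maxn (size r) (\max_(a < size r) size (r`_a)%R))
             (maxn (size s) (\max_(a < size s) size (s`_a)%R))).
by split; apply: bisize_leq_widen (bound _); rewrite ?leq_maxl ?leq_maxr.
Qed.

Lemma beval_sum N r z w : bisize_leq N r ->
  beval r z w = \sum_(a < N) \sum_(b < N) (r`_a)`_b * z ^+ a * w ^+ b.
Proof.
move=> [r_le ra_le].
have map_le : (size (map_poly (fun q : {poly K} => q.[w]) r) <= N)%N.
  exact: leq_trans (size_poly _ _) r_le.
rewrite /beval (horner_coef_wide _ map_le); apply: eq_bigr => a _.
rewrite coef_map_id0 ?horner0 // (horner_coef_wide _ (ra_le a)) mulr_suml.
by apply: eq_bigr => b _; rewrite mulrAC.
Qed.

Definition dilate_poly (p : {poly K}) (c : K) : {poly K} := \poly_(i < size p) (p`_i * c ^+ i).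

Lemma coef_dilate_poly p c i : (dilate_poly p c)`_i = p`_i * c ^+ i.
Proof. by rewrite coef_poly; case: ltnP => // i_ge; rewrite nth_default ?mul0r. Qed.

Lemma size_dilate_poly p c : (size (dilate_poly p c) <= size p)%N.
Proof. exact: size_poly. Qed.

Lemma horner_dilate_poly p c t : (dilate_poly p c).[t] = p.[t * c].
Proof.
by rewrite horner_poly horner_coef; apply: eq_bigr => i _; rewrite exprMn mulrA mulrAC.
Qed.

End ComRingPolynomials.

Section Hermitian.
Variable R : realType.
Local Notation C := R[i].
Local Notation Re := (@complex.Re R).
Local Notation Im := (@complex.Im R).

Definition cplx_continuous (g : R * R -> C) :=
  continuous (fun p => Re (g p)) /\ continuous (fun p => Im (g p)).

Lemma cplx_continuous_cst (c : C) : cplx_continuous (fun _ => c).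
Proof. by split; apply: cst_continuous. Qed.

Lemma cplx_continuousD f g :
  cplx_continuous f -> cplx_continuous g -> cplx_continuous (fun p => f p + g p).
Proof.
move=> [fRe fIm] [gRe gIm]; split => p.
  have -> : (fun q => Re (f q + g q)) = (fun q => Re (f q) + Re (g q)).
    by apply/funext => q; case: (f q) (g q) => [? ?] [? ?].
  exact: continuousD (fRe p) (gRe p).
have -> : (fun q => Im (f q + g q)) = (fun q => Im (f q) + Im (g q)).
  by apply/funext => q; case: (f q) (g q) => [? ?] [? ?].
exact: continuousD (fIm p) (gIm p).
Qed.

Lemma cplx_continuousM f g :
  cplx_continuous f -> cplx_continuous g -> cplx_continuous (fun p => f p * g p).
Proof.
move=> [fRe fIm] [gRe gIm]; split => p.
  have -> : (fun q => Re (f q * g q)) =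
            (fun q => Re (f q) * Re (g q) - Im (f q) * Im (g q)).
    by apply/funext => q; case: (f q) (g q) => [? ?] [? ?].
  exact: continuousB (continuousM (fRe p) (gRe p)) (continuousM (fIm p) (gIm p)).
have -> : (fun q => Im (f q * g q)) =
          (fun q => Re (f q) * Im (g q) + Im (f q) * Re (g q)).
  by apply/funext => q; case: (f q) (g q) => [? ?] [? ?].
exact: continuousD (continuousM (fRe p) (gIm p)) (continuousM (fIm p) (gRe p)).
Qed.

Lemma cplx_continuous_sum (I : Type) (s : seq I) (F : I -> R * R -> C) :
  (forall i, cplx_continuous (F i)) -> cplx_continuous (fun p => \sum_(i <- s) F i p).
Proof.
move=> F_cont; elim: s => [|i s IH].
  under [fun p => _]funext do rewrite big_nil; exact: cplx_continuous_cst.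
under [fun p => _]funext do rewrite big_cons; exact: cplx_continuousD.
Qed.

Lemma cplx_continuousX f n : cplx_continuous f -> cplx_continuous (fun p => f p ^+ n).
Proof.
move=> f_cont; elim: n => [|n IH].
  under [fun p => _]funext do rewrite expr0; exact: cplx_continuous_cst.
under [fun p => _]funext do rewrite exprS; exact: cplx_continuousM.
Qed.

Lemma cplx_continuous_id : cplx_continuous (fun p => (p.1 +i* p.2)%C).
Proof. by split => p; [apply: cvg_fst | apply: cvg_snd]. Qed.

Lemma cplx_continuous_conj : cplx_continuous (fun p => (p.1 +i* p.2)%C^*).
Proof. by split => p; [apply: cvg_fst | apply: continuousN; apply: cvg_snd]. Qed.

Lemma cplx_continuous_hdiag r : cplx_continuous (fun p => hdiag r (p.1 +i* p.2)%C).
Proof.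
have [N [r_le _]] := bisize_leq_exists r r.
under [fun p => _]funext do rewrite /hdiag (beval_sum _ _ r_le).
apply: cplx_continuous_sum => a; apply: cplx_continuous_sum => b.
apply: cplx_continuousM; last exact/cplx_continuousX/cplx_continuous_conj.
exact/cplx_continuousM/cplx_continuousX/cplx_continuous_id/cplx_continuous_cst.
Qed.

(* The closed disc of radius T is contained in the compact square [-T, T]^2,
   on which the real part of g attains its minimum. *)
Lemma pos_continuous_bounded_below_on_disc (g : C -> C) (T : R) : 0 <= T ->
  cplx_continuous (fun p => g (p.1 +i* p.2)%C) -> (forall z, 0 < g z) ->
  exists2 mu : R, 0 < mu & forall z, `|z| <= T%:C%C -> mu%:C%C <= g z.
Proof.
move=> T_ge0 [g_cont _] g_gt0.
pose A := (`[- T, T]%classic `*` `[- T, T]%classic)%classic.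
have A_neq0 : (A !=set0)%classic.
  by exists (0, 0); rewrite /A /= !in_itv /= oppr_le0 T_ge0.
have A_compact : compact A by apply: compact_setX; apply: segment_compact.
have [c cA c_min] := compact_EVT_min A_neq0 A_compact (continuous_subspaceT g_cont).
exists (Re (g (c.1 +i* c.2)%C)).
  by have := g_gt0 (c.1 +i* c.2)%C; rewrite ltcE => /andP[].
move=> [a b] z_le.
have abA : (a, b) \in A.
  rewrite inE /A /= !in_itv /= -!ler_norml.
  have := normc_ge_Re (a +i* b)%C; have := normc_ge_Re ((a +i* b)%C * 'i%C).
  rewrite ReiNIm normrN normrM normCi mulr1 /= => Im_le Re_le.
  by split; rewrite -lecR; [apply: le_trans Re_le z_le | apply: le_trans Im_le z_le].
have g_min : (Re (g (c.1 +i* c.2)%C))%:C%C <= (Re (g (a +i* b)%C))%:C%C.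
  by rewrite lecR; exact: (c_min _ abA).
by apply: le_trans g_min _; rewrite RRe_real ?gtr0_real.
Qed.

Section RayPolynomials.
Variable N : nat.

Definition ray_poly (r : {poly {poly C}}) (u : C) : {poly C} :=
  \sum_(a < N) \sum_(b < N) ((r`_a)`_b * u ^+ a * u^* ^+ b) *: 'X^(a + b).

Lemma hdiag_ray r u t : bisize_leq N r -> t^* = t -> hdiag r (t * u) = (ray_poly r u).[t].
Proof.
move=> r_le t_real; rewrite /hdiag (beval_sum _ _ r_le) horner_sum.
apply: eq_bigr => a _; rewrite horner_sum; apply: eq_bigr => b _.
by rewrite hornerZ hornerXn rmorphM /= t_real !exprMn exprD; ring.
Qed.

Lemma coef_ray_poly r u k : (ray_poly r u)`_k =
  \sum_(a < N) \sum_(b < N) (r`_a)`_b * u ^+ a * u^* ^+ b * (k == a + b)%N%:R.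
Proof.
rewrite coef_sum; apply: eq_bigr => a _; rewrite coef_sum; apply: eq_bigr => b _.
by rewrite coefZ coefXn.
Qed.

Definition coef_norm_sum (r : {poly {poly C}}) := \sum_(a < N) \sum_(b < N) `|(r`_a)`_b|.

Lemma norm_coef_ray_poly_le r u k : `|u| = 1 -> `|(ray_poly r u)`_k| <= coef_norm_sum r.
Proof.
move=> u_unit; rewrite coef_ray_poly; apply: le_trans (ler_norm_sum _ _ _) _.
apply: ler_sum => a _; apply: le_trans (ler_norm_sum _ _ _) _.
apply: ler_sum => b _; rewrite !normrM !normrX norm_conjC u_unit !expr1n !mulr1.
by case: (k == _); rewrite ?normr1 ?normr0 ?mulr1 ?mulr0.
Qed.

Lemma size_ray_poly r u : (size (ray_poly r u) <= N + N)%N.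
Proof.
have size_sum (I : finType) (F : I -> {poly C}) :
    (forall i, size (F i) <= N + N)%N -> (size (\sum_i F i)%R <= N + N)%N.
  move=> F_le; apply: (big_ind (fun p : {poly C} => size p <= N + N)%N) => //.
    by rewrite size_poly0.
  by move=> p q p_le q_le; apply: leq_trans (size_polyD _ _) _; rewrite geq_max p_le q_le.
rewrite /ray_poly; apply: (size_sum 'I_N) => a; apply: (size_sum 'I_N) => b.
apply: leq_trans (size_scale_leq _ _) _.
by rewrite size_polyXn; have := ltn_ord a; have := ltn_ord b; lia.
Qed.

(* Polarization: if all ray polynomials of s vanish, then antidiag_poly s k vanishes
   on the unit circle, so its coefficients s_ab (a + b = k) are all 0. *)
Definition antidiag_poly (s : {poly {poly C}}) (k : nat) : {poly C} :=
  \sum_(a < N) \sum_(b < N) ((s`_a)`_b * (k == a + b)%N%:R) *: 'X^(a + a).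

Lemma horner_antidiag_poly s k u : u * u^* = 1 ->
  (antidiag_poly s k).[u] = u ^+ k * (ray_poly s u)`_k.
Proof.
move=> u_unit; rewrite coef_ray_poly /antidiag_poly horner_sum mulr_sumr.
apply: eq_bigr => a _; rewrite horner_sum mulr_sumr; apply: eq_bigr => b _.
rewrite hornerZ hornerXn; case: eqP => [->|_]; last by rewrite !mulr0 mul0r.
rewrite !mulr1; transitivity ((s`_a)`_b * u ^+ (a + a) * (u * u^*) ^+ b).
  by rewrite u_unit expr1n mulr1.
by rewrite exprMn !exprD; ring.
Qed.

Lemma coef_antidiag_poly s k i : (antidiag_poly s k)`_i =
  \sum_(a < N) \sum_(b < N) (s`_a)`_b * (k == a + b)%N%:R * (i == a + a)%N%:R.
Proof.
rewrite coef_sum; apply: eq_bigr => a _; rewrite coef_sum; apply: eq_bigr => b _.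
by rewrite coefZ coefXn.
Qed.

Lemma coef_antidiag_poly_diag s a b : (a < N)%N -> (b < N)%N ->
  (antidiag_poly s (a + b))`_(a + a) = (s`_a)`_b.
Proof.
move=> a_lt b_lt; rewrite coef_antidiag_poly (bigD1 (Ordinal a_lt)) //=.
rewrite [X in _ + X]big1 ?addr0; last first.
  move=> a' a'_neq; rewrite big1 // => b' _.
  have -> : (a + a == a' + a')%N = false.
    by apply/eqP => e; move/eqP: a'_neq; apply; apply: val_inj => /=; lia.
  by rewrite mulr0.
rewrite (bigD1 (Ordinal b_lt)) //= [X in _ + X]big1 ?addr0; last first.
  move=> b' b'_neq; have -> : (a + b == a + b')%N = false.
    by apply/eqP => e; move/eqP: b'_neq; apply; apply: val_inj => /=; lia.
  by rewrite mulr0 mul0r.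
by rewrite !eqxx !mulr1.
Qed.

End RayPolynomials.

Lemma poly_eq_on_nat (p q : {poly C}) : (forall n : nat, p.[n%:R] = q.[n%:R]) -> p = q.
Proof. by apply: poly_eq_on_injective => m n /eqP; rewrite eqr_nat => /eqP. Qed.

Definition circle_pt (j : nat) : C := (1 +i* j%:R)%C / (1 +i* j%:R)%C^*.

Lemma circle_pt_num_neq0 j : (1 +i* j%:R)%C != 0 :> C.
Proof. by apply/eqP => /(congr1 Re) /= /eqP; rewrite oner_eq0. Qed.

Lemma circle_pt_unit j : circle_pt j * (circle_pt j)^* = 1.
Proof.
rewrite -normCK normrM normfV norm_conjC mulfV ?expr1n //.
by rewrite normr_eq0 circle_pt_num_neq0.
Qed.

Lemma circle_pt_inj : injective circle_pt.
Proof.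
move=> j k /eqP; rewrite eqr_div ?conjC_eq0 ?circle_pt_num_neq0 //.
move=> /eqP /(congr1 Im) /=; rewrite !mul1r !mulr1 => jk.
by apply/eqP; rewrite -(eqr_nat R); apply/eqP; lra.
Qed.

Lemma hdiag_eq0_poly_eq0 N (s : {poly {poly C}}) :
  bisize_leq N s -> (forall z, hdiag s z = 0) -> s = 0.
Proof.
move=> s_le s_diag0.
have ray0 u : ray_poly N s u = 0.
  apply: poly_eq_on_nat => n.
  by rewrite horner0 -(hdiag_ray _ s_le) ?conjC_nat ?s_diag0.
have antidiag0 k : antidiag_poly N s k = 0.
  apply: (poly_eq_on_injective circle_pt_inj) => j.
  by rewrite horner0 horner_antidiag_poly ?circle_pt_unit // ray0 coef0 mulr0.
have coef0_lt a b : (a < N)%N -> (b < N)%N -> (s`_a)`_b = 0.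
  by move=> a_lt b_lt; rewrite -(coef_antidiag_poly_diag s a_lt b_lt) antidiag0 coef0.
case: s_le => s_le sa_le.
apply/polyP => a; rewrite coef0; have [a_lt|a_ge] := ltnP a N; last first.
  by rewrite nth_default // (leq_trans s_le a_ge).
apply/polyP => b; rewrite coef0; have [b_lt|b_ge] := ltnP b N; first exact: coef0_lt.
by rewrite nth_default // (leq_trans (sa_le a) b_ge).
Qed.

Definition sqnorm_ray (F : seq {poly C}) (u : C) : {poly C} :=
  \sum_(f <- F) dilate_poly f u * dilate_poly (map_poly Num.conj f) u^*.

Lemma horner_sqnorm_ray F u t : t^* = t -> (sqnorm_ray F u).[t] = sqnorm F (t * u).
Proof.
move=> t_real; rewrite horner_sum; apply: eq_bigr => f _.
by rewrite hornerM !horner_dilate_poly -t_real -rmorphM horner_map t_real normCK.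
Qed.

Lemma size_map_conj (f : {poly C}) : size (map_poly Num.conj f) = size f.
Proof. exact/size_map_inj_poly/conjC0/(can_inj conjCK). Qed.

Lemma coef_sqnorm_ray_top (F : seq {poly C}) u n : `|u| = 1 ->
  (forall f, f \in F -> size f <= n.+1)%N ->
  (sqnorm_ray F u)`_(n + n) = \sum_(f <- F) `|f`_n| ^+ 2.
Proof.
move=> u_unit F_le; rewrite coef_sum !big_seq; apply: eq_bigr => f /F_le f_le.
rewrite coefM_double ?coef_dilate_poly ?coef_map /=; last 2 first.
- exact: leq_trans (size_dilate_poly _ _) f_le.
- by apply: leq_trans (size_dilate_poly _ _) _; rewrite size_map_conj.
by rewrite normCK mulrACA -exprMn -(normCK u) u_unit !expr1n mulr1.
Qed.

Lemma size_sqnorm_ray (F : seq {poly C}) u n : (forall f, f \in F -> size f <= n.+1)%N ->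
  (size (sqnorm_ray F u) <= (n + n).+1)%N.
Proof.
move=> F_le; rewrite /sqnorm_ray big_seq.
apply: (big_ind (fun p : {poly C} => size p <= (n + n).+1)%N) => //.
- by rewrite size_poly0.
- by move=> p q p_le q_le; apply: leq_trans (size_polyD _ _) _; rewrite geq_max p_le q_le.
move=> f /F_le f_le; apply: leq_trans (size_polyMleq _ _) _.
have p_le := leq_trans (size_dilate_poly f u) f_le.
have q_le : (size (dilate_poly (map_poly Num.conj f) u^*) <= n.+1)%N.
  by apply: leq_trans (size_dilate_poly _ _) _; rewrite size_map_conj.
rewrite -subn1 leq_subLR; apply: leq_trans (leq_add p_le q_le) _.
by rewrite add1n addSn addnS.
Qed.

Section Factorisation.
Variables (N n : nat) (r s : {poly {poly C}}) (F : seq {poly C}).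
Hypotheses (r_le : bisize_leq N r) (s_le : bisize_leq N s).
Hypothesis r_gt0 : forall z, 0 < hdiag r z.
Hypothesis rs_sqnorm : forall z, hdiag r z * hdiag s z = sqnorm F z.
Hypothesis F_le : forall f, f \in F -> (size f <= n.+1)%N.
Let c := \sum_(f <- F) `|f`_n| ^+ 2.
Hypothesis c_gt0 : 0 < c.

Lemma ray_polyM u : ray_poly N r u * ray_poly N s u = sqnorm_ray F u.
Proof.
apply: poly_eq_on_nat => k; have k_real : (k%:R : C)^* = k%:R := conjC_nat _ k.
by rewrite hornerM horner_sqnorm_ray // -(hdiag_ray _ r_le k_real) -(hdiag_ray _ s_le k_real).
Qed.

Lemma lead_coef_ray_polyM u : `|u| = 1 ->
  lead_coef (ray_poly N r u) * lead_coef (ray_poly N s u) = c.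
Proof.
move=> u_unit; rewrite -lead_coefM ray_polyM.
have top : (sqnorm_ray F u)`_(n + n) = c by rewrite coef_sqnorm_ray_top.
suff size_eq : size (sqnorm_ray F u) = (n + n).+1 by rewrite lead_coefE size_eq succnK.
apply/eqP; rewrite eqn_leq size_sqnorm_ray //= ltnNge.
by apply: contraTN c_gt0 => /(nth_default 0); rewrite top => ->; rewrite ltxx.
Qed.

Lemma coef_norm_sum_gt0 : 0 < coef_norm_sum N s.
Proof.
have := lead_coef_ray_polyM (normr1 _).
rewrite [lead_coef (ray_poly N s 1)]lead_coefE => lead_prod.
apply: lt_le_trans (norm_coef_ray_poly_le N s (size (ray_poly N s 1)).-1 (normr1 _)).
by rewrite normr_gt0; apply: contraTneq c_gt0 => s0; rewrite -lead_prod s0 mulr0 ltxx.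
Qed.

Lemma hdiag_bounded_below_far :
  exists2 m : C, 0 < m & exists2 T : C, 0 <= T & forall z, T <= `|z| -> m <= hdiag r z.
Proof.
set Gr := coef_norm_sum N r; set Gs := coef_norm_sum N s.
have Gs_gt0 := coef_norm_sum_gt0.
have Gr_ge0 : 0 <= Gr by rewrite !sumr_ge0 // => a _; rewrite sumr_ge0.
set m := c / Gs; have m_gt0 : 0 < m by rewrite divr_gt0.
have T_ge0 : 0 <= (N + N)%:R * Gr / m := divr_ge0 (mulr_ge0 (ler0n _ _) Gr_ge0) (ltW m_gt0).
exists m => //; exists (1 + (N + N)%:R * Gr / m); first exact: addr_ge0 ler01 T_ge0.
move=> z z_large.
have z_ge1 : 1 <= `|z| by apply: le_trans z_large; rewrite lerDl.
have z_neq0 : `|z| != 0 by rewrite gt_eqF // (lt_le_trans ltr01).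
pose u := z / `|z|; have u_unit : `|u| = 1 by rewrite normrM normfV normr_id mulfV.
have z_polar : z = `|z| * u by rewrite mulrC divfK.
have r_ray : hdiag r z = (ray_poly N r u).[`|z|].
  by rewrite {1}z_polar (hdiag_ray _ r_le (conj_normC z)).
rewrite -[hdiag r z]ger0_norm ?r_ray; last by rewrite -r_ray ltW.
apply: (norm_horner_ge (G := Gr) (L := (N + N)%N)) => //.
- rewrite ler_pdivrMr // -(ger0_norm (ltW c_gt0)) -(lead_coef_ray_polyM u_unit) normrM.
  by rewrite ler_wpM2l ?lead_coefE ?norm_coef_ray_poly_le.
- by move=> k; apply: norm_coef_ray_poly_le.
- exact: size_ray_poly.
- apply: le_trans (ler_wpM2l (ltW m_gt0) z_large).
  by rewrite mulrDr mulr1 lerD2l mulrCA mulfV ?mulr1 // gt_eqF.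
Qed.

End Factorisation.

Lemma sqnorm_eq0 (F : seq {poly C}) : \max_(f <- F) size f = 0%N -> sqnorm F =1 fun=> 0.
Proof.
move=> F_max z; rewrite /sqnorm big_seq big1 // => f fF.
have := @leq_bigmax_seq _ F xpredT size f fF isT.
by rewrite F_max leqn0 size_poly_eq0 => /eqP ->; rewrite horner0 normr0 expr0n.
Qed.

Lemma top_coef_sqnorm_gt0 (F : seq {poly C}) n : \max_(f <- F) size f = n.+1 ->
  0 < \sum_(f <- F) `|f`_n| ^+ 2.
Proof.
move=> F_max; have [f fF f_size] := @bigmax_seq_attained _ F size (ltac:(by rewrite F_max)).
rewrite (big_rem f) //= ltr_wpDr ?sumr_ge0 // => [g _|]; first exact: exprn_ge0.
rewrite exprn_gt0 // normr_gt0 -[n]/(n.+1.-1) -F_max -f_size -lead_coefE.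
by rewrite lead_coef_eq0 -size_poly_eq0 f_size F_max.
Qed.

Lemma hdiag_bounded_below (r s : {poly {poly C}}) (F : seq {poly C}) :
  (forall z, 0 < hdiag r z) -> s != 0 -> (forall z, hdiag r z * hdiag s z = sqnorm F z) ->
  exists2 m : R, 0 < m & forall z, m%:C%C <= hdiag r z.
Proof.
move=> r_gt0 s_neq0 rs_sqnorm; have [N [r_le s_le]] := bisize_leq_exists r s.
case F_max : (\max_(f <- F) size f) => [|n].
  case/negP: s_neq0; apply/eqP/(hdiag_eq0_poly_eq0 s_le) => z.
  by have /eqP := rs_sqnorm z; rewrite sqnorm_eq0 // mulf_eq0 gt_eqF //= => /eqP.
have F_le f : f \in F -> (size f <= n.+1)%N.
  by move=> fF; rewrite -F_max; apply: leq_bigmax_seq.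
have [m m_gt0 [T T_ge0 far]] := hdiag_bounded_below_far r_le s_le r_gt0 rs_sqnorm F_le
  (top_coef_sqnorm_gt0 F_max).
have ReT_ge0 : 0 <= Re T by rewrite -ler0c RRe_real ?ger0_real.
have [mu mu_gt0 near] :=
  pos_continuous_bounded_below_on_disc ReT_ge0 (cplx_continuous_hdiag r) r_gt0.
rewrite RRe_real ?ger0_real // in near.
exists (Num.min mu (Re m)) => [|z].
  by rewrite lt_min mu_gt0; move: m_gt0; rewrite ltcE => /andP[].
have [z_small|z_large] := real_leP (normr_real z) (ger0_real T_ge0).
  by apply: le_trans (near z z_small); rewrite lecR ge_min lexx.
apply: le_trans (far z (ltW z_large)).
by rewrite -[X in _ <= X](RRe_real (gtr0_real m_gt0)) lecR ge_min lexx orbT.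
Qed.

End Hermitian.

Unset Implicit Arguments.

Theorem corollary4p4 (R : realType) (r : {poly {poly R[i]}}) :
  herm_sym r ->
  (forall z : R[i], 0 < hdiag r z) ->
  (forall e : R, 0 < e -> exists z : R[i], hdiag r z < (e%:C)%C) ->
  ~ Qprime1 r.
Proof.
move=> _ r_gt0 r_inf0 [_ [_ [s [F [_ _ s_neq0 rs_sqnorm]]]]].
have [m m_gt0 r_ge] := hdiag_bounded_below r_gt0 s_neq0 rs_sqnorm.
have [z r_lt] := r_inf0 m m_gt0.
by have := lt_le_trans r_lt (r_ge z); rewrite ltxx.
Qed.
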